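(* Let $F\in\mathbb Z[T]$ with $F(0)\in\{-1,1\}$ and let $d\in\mathbb Z_{>0}$. Then there exists $M\in\mathcal D$ such that $F\equiv M\pmod{T^d}$ in $\mathbb Z[T]$.
   Context: $\Phi_n(T)\in\mathbb Z[T]$ denotes the $n$-th cyclotomic polynomial. A positive integer $n$ is of the special form if $n=pm$ where $p$ is prime and $m$ is a positive integer dividing $p-1$. $\mathcal D$ (the special root-of-unity polynomials) is the set of polynomials of the form $\pm\prod_{i}\Phi_{n_i}(T)$, a product of distinct cyclotomic polynomials in which every $n_i$ is of the special form. *)

From HB Require Import structures.
From mathcomp Require Import all_boot all_order all_algebra all_field.
Set Implicit Arguments. Unset Strict Implicit. Unset Printing Implicit Defensive.
Import Order.TTheory GRing.Theory Num.Theory.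
Local Open Scope ring_scope.

Definition special_form (n : nat) : Prop :=
  exists p m : nat, [/\ prime p, (0 < m)%N, (m %| p.-1)%N & n = (p * m)%N].

Definition in_D (M : {poly int}) : Prop :=
  exists (s : seq nat) (b : bool),
    [/\ uniq s, (forall n, n \in s -> special_form n)
      & M = (-1) ^+ b * \prod_(n <- s) 'Phi_n].

From HB Require Import structures.
From mathcomp Require Import all_boot all_order all_algebra all_field.
From mathcomp Require Import ring zify.
Import Order.TTheory GRing.Theory Num.Theory.
Local Open Scope ring_scope.

(* For a prime p >= d not dividing k, 'X^(p k) - 1 = \prod_(n | k) Phi_n Phi_(p n)
   is -1 modulo X^d, so by induction on k every Phi_k Phi_(p k) is +-1 modulo X^d.
   Taking a large prime p = 1 (mod k) and then a large prime q = 1 (mod p k)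
   (prime factors of Phi_m(N!) are 1 mod m) gives Phi_k = +-Phi_(q p k) modulo X^d,
   with q p k of the special form and as large as we like.  Hence every product of
   cyclotomic polynomials, in particular X^n - 1 and X^n + 1, is congruent modulo
   X^d to elements of D with arbitrarily large indices, and such approximations
   multiply because large indices keep the factors distinct.  Since
   (1 +- X^n)^c = 1 +- c X^n modulo X^(n+1), F is then matched one coefficient at
   a time. *)

Section CongruenceModXn.
Context {R : comNzRingType}.
Implicit Types (f g h : {poly R}) (d : nat).

Definition congX d f g := exists Q, f - g = Q * 'X^d.

Definition sign_modX d f := exists e : nat, congX d f ((-1) ^+ e).

Lemma congXxx d f : congX d f f.
Proof. by exists 0; rewrite subrr mul0r. Qed.

Lemma congX_sym {d f g} : congX d f g -> congX d g f.
Proof. by case=> Q fgQ; exists (- Q); rewrite mulNr -fgQ opprB. Qed.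

Lemma congX_trans {d f g h} : congX d f g -> congX d g h -> congX d f h.
Proof.
by case=> Q1 fg [Q2 gh]; exists (Q1 + Q2); rewrite mulrDl -fg -gh addrA subrK.
Qed.

Lemma congXD {d f1 g1 f2 g2} :
  congX d f1 g1 -> congX d f2 g2 -> congX d (f1 + f2) (g1 + g2).
Proof.
case=> Q1 fg1 [Q2 fg2]; exists (Q1 + Q2).
by rewrite mulrDl -fg1 -fg2; ring.
Qed.

Lemma congXM {d f1 g1 f2 g2} :
  congX d f1 g1 -> congX d f2 g2 -> congX d (f1 * f2) (g1 * g2).
Proof.
case=> Q1 fg1 [Q2 fg2]; exists (Q1 * f2 + g1 * Q2).
have -> : f1 * f2 - g1 * g2 = (f1 - g1) * f2 + g1 * (f2 - g2) by ring.
by rewrite fg1 fg2; ring.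
Qed.

Lemma congXMl {d} h {f g} : congX d f g -> congX d (h * f) (h * g).
Proof. exact/congXM/congXxx. Qed.

Lemma congX_leq d d' f g : (d' <= d)%N -> congX d f g -> congX d' f g.
Proof.
by move=> le_d'd [Q fgQ]; exists (Q * 'X^(d - d')); rewrite fgQ -mulrA -exprD subnK.
Qed.

Lemma congXMXn {d} n {f g} : congX d f g -> congX (d + n) (f * 'X^n) (g * 'X^n).
Proof. by case=> Q fgQ; exists Q; rewrite -mulrBl fgQ -mulrA -exprD. Qed.

Lemma congX1_coef0 f : congX 1 f (f`_0)%:P.
Proof.
exists (drop_poly 1 f); rewrite -{1}(poly_take_drop 1 f) addrAC.
suff -> : take_poly 1 f = (f`_0)%:P by rewrite subrr add0r.
by apply/polyP => i; rewrite coef_take_poly coefC; case: i.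
Qed.

Lemma congX_coef0 {d f g} : (0 < d)%N -> congX d f g -> f`_0 = g`_0.
Proof.
move=> d_gt0 [Q /(congr1 (coefp 0))] /=; rewrite coefB coefMXn d_gt0.
by move/eqP; rewrite subr_eq0 => /eqP.
Qed.

Lemma congX_1addX_exp d P n :
  congX d.*2 ((1 + P * 'X^d) ^+ n) (1 + P *+ n * 'X^d).
Proof.
elim: n => [|n IHn]; first by rewrite mulr0n mul0r addr0 expr0; apply: congXxx.
rewrite exprS; apply: congX_trans (congXMl _ IHn) _.
exists (P * P *+ n); rewrite -addnn exprD mulrS; ring.
Qed.

Lemma congX_sign_cancel {d a b c e1 e2} :
  congX d (a * b) ((-1) ^+ e1) -> congX d (b * c) ((-1) ^+ e2) ->
  congX d a ((-1) ^+ (e1 + e2) * c).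
Proof.
move=> ab bc.
have := congXM bc (congXxx d ((-1) ^+ e2)); rewrite -expr2 sqrr_sign => bc1.
rewrite -[a in congX _ a _]mulr1; apply: congX_trans (congX_sym (congXMl a bc1)) _.
have -> : a * (b * c * (-1) ^+ e2) = (a * b) * (c * (-1) ^+ e2) by ring.
have -> : (-1) ^+ (e1 + e2) * c = (-1) ^+ e1 * (c * (-1) ^+ e2) by rewrite exprD; ring.
exact: congXM ab (congXxx _ _).
Qed.

Lemma sign_modXM d f g : sign_modX d f -> sign_modX d g -> sign_modX d (f * g).
Proof. by case=> e1 f1 [e2 g1]; exists (e1 + e2)%N; rewrite exprD; apply: congXM. Qed.

Lemma sign_modX_prod d (I : Type) (s : seq I) (P : pred I) (F : I -> {poly R}) :
  (forall i, P i -> sign_modX d (F i)) -> sign_modX d (\prod_(i <- s | P i) F i).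
Proof.
move=> FP; apply: big_ind FP; last exact: sign_modXM.
by exists 0%N; apply: congXxx.
Qed.

End CongruenceModXn.

Lemma Cyclotomic_coef0_unit m : (0 < m)%N -> ('Phi_m)`_0 \is a GRing.unit.
Proof.
move=> m_gt0; have := congr1 (coefp 0) (prod_Cyclotomic m_gt0).
rewrite (big_rem m) ?divisors_id //= coef0M coefB coefXn coef1 eqxx.
rewrite eq_sym (negbTE (lt0n_neq0 m_gt0)) sub0r => Phi0M.
apply/unitrP; exists (- (\prod_(n <- rem m (divisors m)) 'Phi_n)`_0).
by rewrite mulrN mulNr mulrC Phi0M opprK.
Qed.

Lemma Cyclotomic_horner_gt1 m N : (0 < m)%N -> (3 <= N)%N -> 1 < `|('Phi_m).[N%:R]|.
Proof.
move=> m_gt0 N_ge3; have [z prim_z] := C_prim_root_exists m_gt0.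
rewrite -(ltr_int algC) intr_norm -horner_map rmorph_nat rmorph1.
rewrite (Cintr_Cyclotomic prim_z) horner_prod normr_prod.
have z1 : `|z| = 1.
  by apply/eqP; rewrite -(pexpr_eq1 m_gt0) // -normrX (prim_expr_order prim_z) normr1.
have factor_ge2 (k : 'I_m) : 2 <= `|('X - (z ^+ k)%:P).[N%:R]|.
  rewrite hornerXsubC; apply: le_trans (lerB_normD _ _).
  by rewrite normrN normrX z1 expr1n normr_nat lerBrDr -mulrSr ler_nat.
have one_ltm : (1 %% m < m)%N by rewrite ltn_pmod.
rewrite (bigD1 (Ordinal one_ltm)) /= ?coprime_modl ?coprime1n //.
apply: (@lt_le_trans _ _ 2%:R); first by rewrite ltr1n.
rewrite -[2%:R]mulr1 ler_pM //; first exact: (factor_ge2 (Ordinal one_ltm)).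
apply: (big_ind (fun x : algC => 1 <= x)) => // [x y|k _]; first exact: mulr_ege1.
by apply: le_trans (factor_ge2 k); rewrite ler1n.
Qed.

Lemma root_Cyclotomic_prim (F : fieldType) m (x : F) :
    (0 < m)%N -> m%:R != 0 :> F -> root (map_poly intr 'Phi_m) x ->
  m.-primitive_root x.
Proof.
move=> m_gt0 m_neq0 Phix.
pose phi n : {poly F} := map_poly intr 'Phi_n.
have prod_phi n : (0 < n)%N -> \prod_(k <- divisors n) phi k = 'X^n - 1.
  by move=> n_gt0; rewrite -rmorph_prod prod_Cyclotomic // rmorphB /= rmorph1 map_polyXn.
have xm1 : x ^+ m = 1.
  have : root (\prod_(k <- divisors m) phi k) x.
    by rewrite (big_rem m) ?divisors_id //= rootM Phix.
  by rewrite prod_phi // /root !hornerE subr_eq0 => /eqP.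
have [o prim_o o_dvd_m] := prim_order_exists m_gt0 xm1.
have o_gt0 := prim_order_gt0 prim_o.
case: (eqVneq o m) => [<- // | o_neq_m].
have o_lt_m : (o < m)%N by rewrite ltn_neqAle o_neq_m dvdn_leq.
have : root (\prod_(k <- divisors o) phi k) x.
  by rewrite prod_phi // /root !hornerE (prim_expr_order prim_o) subrr.
rewrite /root horner_prod prodf_seq_eq0 => /hasP [k k_dvd_o /= phik_x].
rewrite -dvdn_divisors // in k_dvd_o.
have k_in : k \in rem m (divisors m).
  rewrite mem_rem_uniq ?divisors_uniq // inE -dvdn_divisors // (dvdn_trans k_dvd_o) //.
  by rewrite andbT neq_ltn (leq_ltn_trans (dvdn_leq o_gt0 k_dvd_o)).
have := separable_Xn_sub_1 m_neq0.
rewrite -prod_phi // (big_rem m) ?divisors_id // (big_rem k k_in) /=.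
rewrite separable_mul => /and3P [_ _ /coprimep_root /(_ Phix)].
by rewrite hornerM (eqP phik_x) mul0r eqxx.
Qed.

Lemma exists_prime_gt_dvd_pred m B :
  (0 < m)%N -> exists p, [/\ prime p, (B < p)%N & (m %| p.-1)%N].
Proof.
(* A prime factor q of Phi_m(N) does not divide N = (m + B + 3)`! as Phi_m(0) is a
   unit, so q > m + B + 3 and N is a primitive m-th root of unity modulo q. *)
move=> m_gt0; pose N := (m + B + 3)`!.
have N_ge3 : (3 <= N)%N by apply: leq_trans (fact_geq _); rewrite leq_addl.
pose v : int := ('Phi_m).[N%:R].
have v_gt1 : (1 < `|v|)%N by rewrite -ltz_nat abszE; apply: Cyclotomic_horner_gt1.
pose q := pdiv `|v|; have q_pr : prime q := pdiv_prime v_gt1.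
have Fq_nat0 n : (n%:R == 0 :> 'F_q) = (q %| n)%N.
  by rewrite (dvdn_pcharf (pchar_Fp q_pr)).
pose x : 'F_q := N%:R.
have Phix : root (map_poly intr 'Phi_m) x.
  rewrite /root -[x](rmorph_nat (intr : int -> 'F_q)) horner_map /= -/v.
  by rewrite [v]intEsign rmorphM rmorph_sign /= -pmulrn mulf_eq0 Fq_nat0 pdiv_dvd orbT.
have x_neq0 : x != 0.
  apply: contraTneq Phix => ->; rewrite /root horner_coef0 coef_map /= -unitfE.
  exact/rmorph_unit/Cyclotomic_coef0_unit.
have q_large : (m + B + 3 < q)%N.
  by rewrite ltnNge; apply: contra x_neq0 => q_le; rewrite Fq_nat0 dvdn_fact ?prime_gt0.
have m_neq0 : m%:R != 0 :> 'F_q by rewrite Fq_nat0 gtnNdvd //; lia.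
exists q; split => //; first lia.
rewrite (prim_order_dvd (root_Cyclotomic_prim _ _ _ m_gt0 m_neq0 Phix)).
apply/eqP/(mulIf x_neq0); rewrite mul1r -exprSr prednK ?prime_gt0 //.
by rewrite -[X in _ ^+ X](card_Fp q_pr) expf_card.
Qed.

Lemma divisors_pmul p k : prime p -> ~~ (p %| k)%N -> (0 < k)%N ->
  perm_eq (divisors (p * k)) (divisors k ++ map (muln p) (divisors k)).
Proof.
move=> p_pr p_ndvd_k k_gt0; have p_gt0 := prime_gt0 p_pr.
have pk_gt0 : (0 < p * k)%N by rewrite muln_gt0 p_gt0.
have mulp_inj : injective (muln p) by move=> a b /eqP; rewrite eqn_pmul2l // => /eqP.
apply: uniq_perm; first exact: divisors_uniq.
  rewrite cat_uniq divisors_uniq (map_inj_uniq mulp_inj) divisors_uniq andbT /=.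
  apply/hasPn => _ /mapP [n _ ->]; rewrite -dvdn_divisors //.
  by apply: contra p_ndvd_k; apply: dvdn_trans; apply: dvdn_mulr.
move=> n; rewrite mem_cat -!dvdn_divisors //; apply/idP/orP.
  have [/dvdnP [n' ->] | p_ndvd_n] := boolP (p %| n)%N.
    by rewrite mulnC dvdn_pmul2l // => n'_dvd_k; right; apply: map_f; rewrite -dvdn_divisors.
  have n_coprime_p : coprime n p by rewrite coprime_sym prime_coprime.
  by rewrite mulnC (Gauss_dvdl _ n_coprime_p); left.
case=> [n_dvd_k | /mapP [n' n'_dvd_k ->]]; first exact: dvdn_mull.
by rewrite dvdn_pmul2l // dvdn_divisors.
Qed.

Lemma Cyclotomic_pair_sign_modX {d p k} :
  prime p -> (d <= p)%N -> ~~ (p %| k)%N -> (0 < k)%N ->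
  sign_modX d ('Phi_k * 'Phi_(p * k)).
Proof.
move=> p_pr d_le_p; elim/ltn_ind: k => k IHk p_ndvd_k k_gt0.
have pk_gt0 : (0 < p * k)%N by rewrite muln_gt0 prime_gt0.
have prodE : \prod_(n <- divisors k) ('Phi_n * 'Phi_(p * n)) = 'X^(p * k) - 1.
  rewrite big_split /= -(big_map (muln p) predT (fun n => 'Phi_n)) -big_cat /=.
  by rewrite -(perm_big _ (divisors_pmul _ _ p_pr p_ndvd_k k_gt0)) prod_Cyclotomic.
set Phi_pair := fun n => 'Phi_n * 'Phi_(p * n).
have [e others] : sign_modX d (\prod_(n <- rem k (divisors k)) Phi_pair n).
  rewrite big_seq; apply: sign_modX_prod => n.
  rewrite mem_rem_uniq ?divisors_uniq // inE -dvdn_divisors // => /andP [n_neq_k n_dvd_k].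
  apply: IHk; first by rewrite ltn_neqAle n_neq_k dvdn_leq.
    by apply: contra p_ndvd_k => /dvdn_trans; apply.
  exact: dvdn_gt0 n_dvd_k.
have all_factors : congX d (\prod_(n <- k :: rem k (divisors k)) Phi_pair n) ((-1) ^+ 1).
  rewrite -(perm_big _ (perm_to_rem _)) -?dvdn_divisors // prodE.
  exists 'X^(p * k - d); rewrite expr1 opprK subrK -exprD subnK //.
  exact: leq_trans d_le_p (leq_pmulr _ k_gt0).
exists (1 + e)%N; rewrite -[X in congX _ _ X]mulr1.
rewrite big_cons in all_factors.
by apply: congX_sign_cancel all_factors _; rewrite mulr1.
Qed.

Definition in_D_gt (B : nat) (M : {poly int}) := exists (s : seq nat) (e : nat),
  [/\ uniq s, (forall n, n \in s -> special_form n /\ (B < n)%N)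
    & M = (-1) ^+ e * \prod_(n <- s) 'Phi_n].

Lemma in_D_gt_in_D B M : in_D_gt B M -> in_D M.
Proof.
case=> s [e [s_uniq s_special ->]]; exists s, (odd e); rewrite signr_odd.
by split=> // n /s_special [].
Qed.

Lemma in_D_gt_sign B e : in_D_gt B ((-1) ^+ e).
Proof. by exists [::], e; rewrite big_nil mulr1. Qed.

Lemma in_D_gt_signPhi B e n :
  special_form n -> (B < n)%N -> in_D_gt B ((-1) ^+ e * 'Phi_n).
Proof.
by move=> n_special B_lt_n; exists [:: n], e; rewrite big_seq1; split=> // k /[1!inE] /eqP ->.
Qed.

Lemma in_D_gtM {B M1} :
  in_D_gt B M1 -> exists B', forall M2, in_D_gt B' M2 -> in_D_gt B (M1 * M2).
Proof.
case=> s1 [e1 [s1_uniq s1_special ->]]; exists (B + \max_(n <- s1) n)%N.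
move=> _ [s2 [e2 [s2_uniq s2_special ->]]]; exists (s1 ++ s2), (e1 + e2)%N; split.
- rewrite cat_uniq s1_uniq s2_uniq andbT; apply/hasPn => n /s2_special [_ n_gt].
  apply: contraL n_gt => /(@leq_bigmax_seq _ _ xpredT id) /(_ isT) n_le.
  by rewrite -leqNgt (leq_trans n_le) ?leq_addl.
- move=> n; rewrite mem_cat => /orP [/s1_special // | /s2_special [n_special n_gt]].
  by split=> //; apply: leq_ltn_trans n_gt; apply: leq_addr.
- by rewrite big_cat exprD /=; ring.
Qed.

Definition approxD d (G : {poly int}) := forall B, exists2 M, in_D_gt B M & congX d G M.

Lemma approxD_sign d e : approxD d ((-1) ^+ e).
Proof. by move=> B; exists ((-1) ^+ e); [apply: in_D_gt_sign | apply: congXxx]. Qed.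

Lemma approxD_mul d G1 G2 : approxD d G1 -> approxD d G2 -> approxD d (G1 * G2).
Proof.
move=> approxG1 approxG2 B; have [M1 inM1 G1M1] := approxG1 B.
have [B' inM1M] := in_D_gtM inM1; have [M2 inM2 G2M2] := approxG2 B'.
by exists (M1 * M2); [apply: inM1M | apply: congXM].
Qed.

Lemma approxD_prod d (I : Type) (s : seq I) (P : pred I) (F : I -> {poly int}) :
  (forall i, P i -> approxD d (F i)) -> approxD d (\prod_(i <- s | P i) F i).
Proof. by apply: big_ind; [apply: (approxD_sign d 0) | apply: approxD_mul]. Qed.

Lemma approxD_exp d G n : approxD d G -> approxD d (G ^+ n).
Proof. by move=> approxG; rewrite -(subn0 n) -prodr_const_nat; apply: approxD_prod. Qed.

Lemma approxD_congX {d G G'} : congX d G G' -> approxD d G' -> approxD d G.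
Proof.
move=> GG' approxG' B; have [M inM G'M] := approxG' B.
by exists M => //; apply: congX_trans GG' G'M.
Qed.

Lemma approxD_Phi d k : (0 < k)%N -> approxD d 'Phi_k.
Proof.
move=> k_gt0 B; have [p [p_pr p_gt p_k]] := exists_prime_gt_dvd_pred k (d + k) k_gt0.
have pk_gt0 : (0 < p * k)%N by rewrite muln_gt0 prime_gt0.
have [q [q_pr q_gt q_pk]] := exists_prime_gt_dvd_pred (p * k) (B + d + p * k) pk_gt0.
have p_ndvd_k : ~~ (p %| k)%N by rewrite gtnNdvd //; lia.
have q_ndvd_pk : ~~ (q %| p * k)%N by rewrite gtnNdvd //; lia.
have [e1 Phi_kp] := Cyclotomic_pair_sign_modX (d := d) p_pr ltac:(lia) p_ndvd_k k_gt0.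
have [e2 Phi_pkq] := Cyclotomic_pair_sign_modX (d := d) q_pr ltac:(lia) q_ndvd_pk pk_gt0.
exists ((-1) ^+ (e1 + e2) * 'Phi_(q * (p * k))).
  apply: in_D_gt_signPhi; first by exists q, (p * k).
  by apply: leq_trans (leq_pmulr q pk_gt0); lia.
exact: congX_sign_cancel Phi_kp Phi_pkq.
Qed.

Lemma prod_Cyclotomic_ndvd n :
  (0 < n)%N -> \prod_(k <- divisors n.*2 | ~~ (k %| n)%N) 'Phi_k = 'X^n + 1.
Proof.
move=> n_gt0; have n2_gt0 : (0 < n.*2)%N by rewrite double_gt0.
have := prod_Cyclotomic n2_gt0; rewrite (bigID (dvdn^~ n)) /=.
have -> : \prod_(k <- divisors n.*2 | (k %| n)%N) 'Phi_k = 'X^n - 1.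
  rewrite -big_filter -prod_Cyclotomic //; apply/perm_big/uniq_perm.
  - exact/filter_uniq/divisors_uniq.
  - exact: divisors_uniq.
  move=> k; rewrite mem_filter -!dvdn_divisors //; apply/andP/idP => [[] // | k_dvd_n].
  by split=> //; apply: dvdn_trans k_dvd_n _; rewrite -muln2 dvdn_mulr.
rewrite -muln2 exprM subr_sqr_1; apply: mulfI.
exact/monic_neq0/monic_Xn_sub_1.
Qed.

Lemma approxD_Xn_sub1 d n : (0 < n)%N -> approxD d ('X^n - 1).
Proof.
move=> n_gt0; rewrite -prod_Cyclotomic // big_seq; apply: approxD_prod => k.
by rewrite -dvdn_divisors // => /(dvdn_gt0 n_gt0); apply: approxD_Phi.
Qed.

Lemma approxD_Xn_add1 d n : (0 < n)%N -> approxD d ('X^n + 1).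
Proof.
move=> n_gt0; rewrite -prod_Cyclotomic_ndvd // big_seq_cond; apply: approxD_prod => k.
case/andP; rewrite -dvdn_divisors ?double_gt0 // => /(dvdn_gt0 _) k_gt0 _.
by apply: approxD_Phi; apply: k_gt0; rewrite double_gt0.
Qed.

Lemma approxD_1addCX {n} (c : int) : (0 < n)%N -> approxD n.+1 (1 + c%:P * 'X^n).
Proof.
move=> n_gt0; have n1_le_2n : (n.+1 <= n.*2)%N by rewrite -addnn -addn1 leq_add2l.
have powE (P : {poly int}) : congX n.+1 ((1 + P * 'X^n) ^+ `|c|) (1 + P *+ `|c| * 'X^n).
  exact: congX_leq n1_le_2n (congX_1addX_exp _ _ _).
rewrite [c]intEsign -natz; case: (c < 0); rewrite ?expr0 ?expr1 ?mul1r ?mulN1r.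
- rewrite -mulNrn polyCMn polyCN polyC1.
  apply: approxD_congX (congX_sym (powE (-1))) _.
  have -> : 1 + - 1 * 'X^n = (-1) ^+ 1 * ('X^n - 1) :> {poly int} by ring.
  exact/approxD_exp/approxD_mul/approxD_Xn_sub1/n_gt0/approxD_sign.
- rewrite polyCMn polyC1; apply: approxD_congX (congX_sym (powE 1)) _.
  rewrite mul1r addrC.
  exact/approxD_exp/approxD_Xn_add1.
Qed.

Lemma approxD_coef0_sign {e} {F : {poly int}} d : F`_0 = (-1) ^+ e -> approxD d.+1 F.
Proof.
move=> F0; elim: d => [|d IHd] B.
  exists (F`_0)%:P; last exact: congX1_coef0.
  by rewrite F0 rmorph_sign; apply: in_D_gt_sign.
(* With F = M1 + Q X^(d+1) and M1(0) = F(0) = +-1, the product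
   M1 (1 + F(0) Q(0) X^(d+1)) agrees with F modulo X^(d+2). *)
have [M1 inM1 FM1] := IHd B; have [B' inM1M] := in_D_gtM inM1.
have M10 : M1`_0 = (-1) ^+ e by rewrite -F0 (congX_coef0 (ltn0Sn d) FM1).
case: FM1 => Q FM1.
pose c := (-1) ^+ e * Q`_0.
have [M2 inM2 M2E] := approxD_1addCX c (ltn0Sn d) B'.
exists (M1 * M2); first exact: inM1M.
apply: congX_trans (congXMl M1 M2E); rewrite mulrDr mulr1 mulrCA mulrA.
have -> : F = M1 + Q * 'X^(d.+1) by rewrite -FM1 addrC subrK.
apply: congXD (congXxx _ _) (congXMXn d.+1 (d := 1) _).
apply: congX_trans (congX1_coef0 Q) (congX_sym _).
have -> : (Q`_0)%:P = c%:P * (M1`_0)%:P.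
  by rewrite -polyCM M10 /c mulrAC -expr2 sqrr_sign mul1r.
exact/congXMl/congX1_coef0.
Qed.

Theorem proposition7p3 (F : {poly int}) (d : nat) :
  (F`_0 = 1 \/ F`_0 = -1) -> (0 < d)%N ->
  exists M : {poly int}, in_D M /\ exists Q : {poly int}, F - M = Q * 'X^d.
Proof.
case: d => // d F0 _.
have [e F0e] : exists e, F`_0 = (-1) ^+ e by case: F0; [exists 0%N | exists 1%N].
have [M inM FM] := approxD_coef0_sign d F0e 0.
by exists M; split; [apply: in_D_gt_in_D inM | apply: FM].
Qed.
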